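(* Let $V$ be a commutative unital quantale whose underlying lattice is a frame. A $V$-group $(X,a,+)$ is regular if and only if it is symmetric. Hence, when $\otimes=\wedge$ in $V$, a $V$-group is regular if and only if it is an internal group in $\mathsf{VCat}$.
   Context: A commutative unital quantale $V$ is a complete lattice with a commutative associative operation $\otimes$ with unit $k$ preserving arbitrary joins in each variable. A $V$-category $(X,a)$: $a\colon X\times X\to V$ with $k\le a(x,x)$ and $a(x,x')\otimes a(x',x'')\le a(x,x'')$; $V$-functors are maps $f$ with $a(x,x')\le b(f(x),f(x'))$, forming $\mathsf{VCat}$. $(X,a)$ is regular if $a(x_1,x_2)\otimes a(x_1,x_3)\le a(x_2,x_3)$ for all $x_1,x_2,x_3\in X$, and symmetric if $a(x,x')=a(x',x)$ for all $x,x'$. A $V$-group $(X,a,+)$ is a $V$-category with a group structure (additive, not necessarily abelian) such that $a(x_1,x_2)\otimes a(x_1',x_2')\le a(x_1+x_1',x_2+x_2')$; it is regular (resp. symmetric) if its $V$-category is. An internal group in $\mathsf{VCat}$ is a group object for the cartesian product of $\mathsf{VCat}$ (the product of $(X,a),(Y,b)$ being $X\times Y$ with $(a\wedge b)((x,y),(x',y'))=a(x,x')\wedge b(y,y')$), i.e. a group whose operation, inversion and unit are $V$-functors. *)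

Record quantale := Quantale {
  qcar :> Type;
  qle : qcar -> qcar -> Prop;
  qle_refl : forall x, qle x x;
  qle_trans : forall x y z, qle x y -> qle y z -> qle x z;
  qle_antisym : forall x y, qle x y -> qle y x -> x = y;
  qsup : (qcar -> Prop) -> qcar;
  qsup_ub : forall (S : qcar -> Prop) x, S x -> qle x (qsup S);
  qsup_least : forall (S : qcar -> Prop) y,
      (forall x, S x -> qle x y) -> qle (qsup S) y;
  qtensor : qcar -> qcar -> qcar;
  qk : qcar;
  qtensorA : forall x y z, qtensor x (qtensor y z) = qtensor (qtensor x y) z;
  qtensorC : forall x y, qtensor x y = qtensor y x;
  qtensor1 : forall x, qtensor x qk = x;
  (* preservation of arbitrary joins (in the 2nd variable; by commutativity
     also in the first) *)
  qtensor_sup : forall x (S : qcar -> Prop),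
      qtensor x (qsup S) = qsup (fun z => exists s, S s /\ z = qtensor x s)
}.

Arguments qle {q}.
Arguments qsup {q}.
Arguments qtensor {q}.

Set Implicit Arguments.

Section Lattice.
Variable V : quantale.

Definition qmeet (x y : V) : V := qsup (fun z : V => qle z x /\ qle z y).
Definition qtop : V := @qsup V (fun _ => True).

Definition is_frame : Prop :=
  forall (x : V) (S : V -> Prop),
    qmeet x (qsup S) = qsup (fun z => exists s, S s /\ z = qmeet x s).

Definition is_VCat (X : Type) (a : X -> X -> V) : Prop :=
  (forall x, qle (qk V) (a x x)) /\
  (forall x x' x'', qle (qtensor (a x x') (a x' x'')) (a x x'')).

Definition is_Vfunctor (X Y : Type) (a : X -> X -> V) (b : Y -> Y -> V)
  (f : X -> Y) : Prop :=
  forall x x', qle (a x x') (b (f x) (f x')).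

Definition is_regular (X : Type) (a : X -> X -> V) : Prop :=
  forall x1 x2 x3, qle (qtensor (a x1 x2) (a x1 x3)) (a x2 x3).

Definition is_symmetric (X : Type) (a : X -> X -> V) : Prop :=
  forall x x', a x x' = a x' x.

Definition prod_cat (X Y : Type) (a : X -> X -> V) (b : Y -> Y -> V)
  : (X * Y) -> (X * Y) -> V :=
  fun p q => qmeet (a (fst p) (fst q)) (b (snd p) (snd q)).

Definition terminal_cat : unit -> unit -> V := fun _ _ => qtop.

End Lattice.

Record group_on (X : Type) := GroupOn {
  gadd : X -> X -> X;
  gopp : X -> X;
  gzero : X;
  gaddA : forall x y z, gadd x (gadd y z) = gadd (gadd x y) z;
  gadd0x : forall x, gadd gzero x = x;
  gaddx0 : forall x, gadd x gzero = x;
  gaddNx : forall x, gadd (gopp x) x = gzero;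
  gaddxN : forall x, gadd x (gopp x) = gzero
}.

Definition is_Vgroup (V : quantale) (X : Type) (a : X -> X -> V)
  (G : group_on X) : Prop :=
  is_VCat V a /\
  forall x1 x2 x1' x2',
    qle (qtensor (a x1 x2) (a x1' x2')) (a (gadd G x1 x1') (gadd G x2 x2')).

Definition is_internal_group (V : quantale) (X : Type) (a : X -> X -> V)
  (G : group_on X) : Prop :=
  is_VCat V a /\
  is_Vfunctor V (prod_cat V a a) a (fun p => gadd G (fst p) (snd p)) /\
  is_Vfunctor V a a (gopp G) /\
  is_Vfunctor V (@terminal_cat V) a (fun _ => gzero G).


(* Regularity and symmetry agree for every V-category: [k <= a(x,x)] turns
   regularity into [a(x,y) <= a(y,x)], and conversely symmetry turns
   regularity into transitivity.  In a V-group, translating by group elements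
   costs nothing since [k <= a(y,y)], so inversion is a V-functor exactly when
   [a] is symmetric.  When [⊗ = ∧] the product V-functor condition for [+] is
   the V-group axiom and [k] is the top element, so an internal group is just a
   V-group whose inversion is a V-functor. *)

Section QuantaleFacts.
Context {V : quantale}.

Lemma qtensor_monor (t x y : V) : qle x y -> qle (qtensor t x) (qtensor t y).
Proof.
  intro Hxy.
  assert (Hy : y = qsup (fun z => z = x \/ z = y)).
  { apply qle_antisym.
    - apply qsup_ub; auto.
    - apply qsup_least; intros z [-> | ->]; auto using qle_refl. }
  rewrite Hy, qtensor_sup. apply qsup_ub. exists x; auto.
Qed.

Lemma qtensor_monol (t x y : V) : qle x y -> qle (qtensor x t) (qtensor y t).
Proof.
  intro Hxy. rewrite (qtensorC _ x), (qtensorC _ y). now apply qtensor_monor.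
Qed.

Lemma qle_tensor_unit_ger (t : V) {x : V} : qle (qk V) x -> qle t (qtensor t x).
Proof.
  intro Hx. apply qle_trans with (qtensor t (qk V)).
  - rewrite qtensor1. apply qle_refl.
  - now apply qtensor_monor.
Qed.

Lemma qle_tensor_unit_gel (t : V) {x : V} : qle (qk V) x -> qle t (qtensor x t).
Proof. intro Hx. rewrite qtensorC. now apply qle_tensor_unit_ger. Qed.

Lemma qtop_le_unit : (forall u v : V, qtensor u v = qmeet V u v) ->
  qle (qtop V) (qk V).
Proof.
  intro Hmeet. rewrite <- (qtensor1 _ (qtop V)), Hmeet.
  apply qsup_least. intros z [_ Hz]; exact Hz.
Qed.

End QuantaleFacts.

Section VCategories.
Context {V : quantale} {X : Type} {a : X -> X -> V}.

Lemma symmetric_of_le_swap : (forall x y, qle (a x y) (a y x)) ->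
  is_symmetric V a.
Proof. intros Hswap x y. apply qle_antisym; apply Hswap. Qed.

Lemma VCat_regular_symmetric : is_VCat V a ->
  (is_regular V a <-> is_symmetric V a).
Proof.
  intros [Hrefl Htrans]. split.
  - intro Hreg. apply symmetric_of_le_swap. intros x y.
    eapply qle_trans; [apply (qle_tensor_unit_ger (a x y) (Hrefl x)) | apply Hreg].
  - intros Hsym x1 x2 x3. rewrite Hsym. apply Htrans.
Qed.

Context {G : group_on X}.
Hypothesis HG : is_Vgroup V a G.

Lemma Vgroup_translate x x' y z :
  qle (a x x') (a (gadd G (gadd G y x) z) (gadd G (gadd G y x') z)).
Proof.
  destruct HG as [[Hrefl _] Hadd].
  eapply qle_trans; [apply (qle_tensor_unit_ger _ (Hrefl z)) |].
  eapply qle_trans; [apply qtensor_monol, (qle_tensor_unit_gel _ (Hrefl y)) |].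
  eapply qle_trans; [apply qtensor_monol, Hadd | apply Hadd].
Qed.

Lemma Vgroup_opp_VfunctorP :
  is_Vfunctor V a a (gopp G) <-> is_symmetric V a.
Proof.
  split.
  - intro Hopp. apply symmetric_of_le_swap. intros x y.
    eapply qle_trans; [apply Hopp |].
    eapply qle_trans; [apply (Vgroup_translate _ _ y x) |].
    rewrite <- !gaddA, gaddNx, gaddx0, gaddA, gaddxN, gadd0x. apply qle_refl.
  - intros Hsym x x'.
    eapply qle_trans; [apply (Vgroup_translate _ _ (gopp G x) (gopp G x')) |].
    rewrite <- !gaddA, gaddxN, gaddx0, gaddA, gaddNx, gadd0x, Hsym.
    apply qle_refl.
Qed.

Lemma Vgroup_internalP : (forall u v : V, qtensor u v = qmeet V u v) ->
  (is_internal_group V a G <-> is_symmetric V a).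
Proof.
  intro Hmeet. destruct HG as [HC Hadd]. split.
  - intros (_ & _ & Hopp & _). now apply Vgroup_opp_VfunctorP.
  - intro Hsym. split; [exact HC |]. split; [| split].
    + intros [x1 x1'] [x2 x2']. unfold prod_cat; simpl.
      rewrite <- Hmeet. apply Hadd.
    + now apply Vgroup_opp_VfunctorP.
    + intros [] []. eapply qle_trans; [apply qtop_le_unit, Hmeet | apply HC].
Qed.

End VCategories.

Theorem corollary5p4 (V : quantale) (Hframe : is_frame V) :
  (forall (X : Type) (a : X -> X -> V) (G : group_on X),
      is_Vgroup V a G -> (is_regular V a <-> is_symmetric V a)) /\
  ((forall u v : V, qtensor u v = qmeet V u v) ->
   forall (X : Type) (a : X -> X -> V) (G : group_on X),
      is_Vgroup V a G -> (is_regular V a <-> is_internal_group V a G)).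
Proof.
  split.
  - intros X a G [HC _]. now apply VCat_regular_symmetric.
  - intros Hmeet X a G HG.
    pose proof (VCat_regular_symmetric (proj1 HG)) as Hreg_sym.
    pose proof (Vgroup_internalP HG Hmeet) as Hint_sym.
    tauto.
Qed.
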